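(* Fix $n\ge 3$, and assume that for all positive integers $w_1,\ldots,w_{n-1}$ one has either $\mathrm{ML}(w_1,\ldots,w_{n-1})=\frac{s}{(n-1)s+1}$ for some $s\in\mathbb{N}$ or $\mathrm{ML}(w_1,\ldots,w_{n-1})\ge\frac{1}{n-1}$. Let $v_1<\cdots<v_{n-1}$ be positive integers with $\mathrm{ML}(v_1,\ldots,v_{n-1})=L>\frac1n$. Then $\mathrm{ML}(v_1,\ldots,v_n)\ge\frac1n$ for every positive integer $v_n$ with $v_n\ge(2n-1)v_{n-1}$.
   Context: For a real number $x$, $\Vert x\Vert$ denotes the distance from $x$ to the nearest integer. For positive integers $v_1,\ldots,v_k$, the maximum loneliness is $\mathrm{ML}(v_1,\ldots,v_k)=\max_{t\in\mathbb{R}}\min_{1\le i\le k}\Vert t v_i\Vert$. Here $\mathbb{N}=\{1,2,3,\ldots\}$. *)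

From Stdlib Require Import Reals Lra List.
From Coquelicot Require Import Coquelicot.
Open Scope R_scope.

Definition dist_int (x : R) : R :=
  Rmin (x - IZR (Int_part x)) (IZR (Int_part x) + 1 - x).

(* min_{i} ||t v_i|| over a finite list of positive integers (list nonempty in uses). *)
Definition min_dist (t : R) (vs : list nat) : R :=
  match vs with
  | nil => 0
  | v :: rest => fold_left (fun m w => Rmin m (dist_int (t * INR w))) rest (dist_int (t * INR v))
  end.

(* ML(v_1,...,v_k) = sup_t min_i ||t v_i||  (the sup is attained, so this is the max). *)
Definition ML (vs : list nat) : R :=
  real (Lub_Rbar (fun y => exists t : R, y = min_dist t vs)).

(** If [t] makes all [||t v_i||] at least [L - d], then moving [t] by at most
    [r = (L - 1/n) / v_{n-1}] keeps them at least [1/n - d], while [t v_n]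
    sweeps an interval of length [2 r v_n >= 2 (1/n - d)], which must contain a
    point at distance at least [1/n - d] from the integers.  The dichotomy
    hypothesis and [L > 1/n] give [L >= 2/(2n-1)], which is exactly what makes
    [r v_n >= 1/n] when [v_n >= (2n-1) v_{n-1}]. *)

From Stdlib Require Import Reals Lra Lia List ZArith Classical.
From Coquelicot Require Import Coquelicot.
Open Scope R_scope.

Lemma dist_int_le_Rabs (x : R) (k : Z) : dist_int x <= Rabs (x - IZR k).
Proof.
  unfold dist_int. destruct (base_Int_part x) as [Hfl Hfr].
  set (f := Int_part x) in *.
  destruct (Z_le_gt_dec k f) as [Hk | Hk].
  - apply IZR_le in Hk. rewrite Rabs_right by lra.
    apply Rle_trans with (x - IZR f); [apply Rmin_l | lra].
  - assert (Hk' : IZR (f + 1) <= IZR k) by (apply IZR_le; lia).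
    rewrite plus_IZR in Hk'. rewrite Rabs_left1 by lra.
    apply Rle_trans with (IZR f + 1 - x); [apply Rmin_r | lra].
Qed.

Lemma dist_int_attained (x : R) : exists k : Z, dist_int x = Rabs (x - IZR k).
Proof.
  unfold dist_int. destruct (base_Int_part x) as [Hfl Hfr].
  set (f := Int_part x) in *.
  destruct (Rle_dec (x - IZR f) (IZR f + 1 - x)).
  - exists f. rewrite Rmin_left, Rabs_right by lra. reflexivity.
  - exists (f + 1)%Z. rewrite Rmin_right, plus_IZR, Rabs_left1 by lra. ring.
Qed.

Lemma dist_int_nonneg (x : R) : 0 <= dist_int x.
Proof. destruct (dist_int_attained x) as [k ->]. apply Rabs_pos. Qed.

Lemma dist_int_le_half (x : R) : dist_int x <= 1 / 2.
Proof.
  unfold dist_int.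
  destruct (Rle_dec (x - IZR (Int_part x)) (IZR (Int_part x) + 1 - x)).
  - apply Rle_trans with (x - IZR (Int_part x)); [apply Rmin_l | lra].
  - apply Rle_trans with (IZR (Int_part x) + 1 - x); [apply Rmin_r | lra].
Qed.

Lemma dist_int_Lipschitz (x y : R) : dist_int x - Rabs (x - y) <= dist_int y.
Proof.
  destruct (dist_int_attained y) as [k ->].
  pose proof (dist_int_le_Rabs x k).
  pose proof (Rabs_triang (x - y) (y - IZR k)).
  replace (x - y + (y - IZR k)) with (x - IZR k) in * by ring. lra.
Qed.

Lemma dist_int_ge_between (k : Z) (x c : R) :
  0 <= c -> IZR k + c <= x <= IZR k + 1 - c -> c <= dist_int x.
Proof.
  intros Hc Hx. destruct (dist_int_attained x) as [j ->].
  destruct (Z_le_gt_dec j k) as [Hj | Hj].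
  - apply IZR_le in Hj. rewrite Rabs_right by lra. lra.
  - assert (Hj' : IZR (k + 1) <= IZR j) by (apply IZR_le; lia).
    rewrite plus_IZR in Hj'. rewrite Rabs_left1 by lra. lra.
Qed.

Lemma dist_int_ge_in_interval (a c : R) :
  0 < c <= 1 / 2 -> exists y, a <= y <= a + 2 * c /\ c <= dist_int y.
Proof.
  intros Hc. destruct (base_Int_part a) as [Hfl Hfr].
  set (f := Int_part a) in *.
  destruct (Rlt_dec (a - IZR f) c).
  - exists (IZR f + c). split; [lra |]. apply (dist_int_ge_between f); lra.
  - destruct (Rlt_dec (1 - c) (a - IZR f)).
    + exists (IZR (f + 1) + c). rewrite plus_IZR. split; [lra |].
      apply (dist_int_ge_between (f + 1)); rewrite ?plus_IZR; lra.
    + exists a. split; [lra |]. apply (dist_int_ge_between f); lra.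
Qed.

Lemma fold_Rmin_ge_iff (t a c : R) (ws : list nat) :
  c <= fold_left (fun m w => Rmin m (dist_int (t * INR w))) ws a <->
  c <= a /\ forall w, In w ws -> c <= dist_int (t * INR w).
Proof.
  revert a. induction ws as [| w0 ws IH]; intros a; simpl.
  - split; [tauto | intros [Ha _]; exact Ha].
  - rewrite IH. unfold Rmin. destruct (Rle_dec a (dist_int (t * INR w0))).
    + split.
      * intros [Ha Hws]. split; [lra |]. intros w [<- | Hw]; [lra | auto].
      * intros [Ha Hws]. auto.
    + split.
      * intros [Ha Hws]. split; [lra |]. intros w [<- | Hw]; auto.
      * intros [Ha Hws]. auto.
Qed.

Lemma min_dist_ge_iff (t c : R) (vs : list nat) : vs <> nil ->
  c <= min_dist t vs <-> forall w, In w vs -> c <= dist_int (t * INR w).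
Proof.
  intros Hne. destruct vs as [| v0 vs]; [congruence |].
  unfold min_dist. rewrite fold_Rmin_ge_iff. split.
  - intros [H0 Hvs] w [<- | Hw]; auto.
  - intros H. split; [apply H; left | intros w Hw; apply H; right]; auto.
Qed.

Lemma min_dist_le_half (t : R) (vs : list nat) : vs <> nil -> min_dist t vs <= 1 / 2.
Proof.
  intros Hne. destruct vs as [| v0 vs]; [congruence |].
  apply Rle_trans with (dist_int (t * INR v0)); [| apply dist_int_le_half].
  apply (proj1 (min_dist_ge_iff t _ _ Hne) (Rle_refl _)). left. reflexivity.
Qed.

Lemma ML_is_lub (vs : list nat) : vs <> nil ->
  is_lub_Rbar (fun y => exists t, y = min_dist t vs) (Finite (ML vs)).
Proof.
  intros Hne. set (E := fun y => exists t, y = min_dist t vs).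
  destruct (Lub_Rbar_correct E) as [Hub Hleast]. unfold ML; fold E.
  destruct (Lub_Rbar E) as [l | |] eqn:Hl.
  - split; assumption.
  - exfalso. apply (Hleast (Finite (1 / 2))).
    intros y [t ->]. apply min_dist_le_half, Hne.
  - exfalso. apply (Hub (min_dist 0 vs)). exists 0. reflexivity.
Qed.

Lemma ML_ge_min_dist (t : R) (vs : list nat) : vs <> nil -> min_dist t vs <= ML vs.
Proof. intros Hne. apply (ML_is_lub vs Hne). exists t. reflexivity. Qed.

Lemma ML_approx (vs : list nat) (e : R) : vs <> nil -> 0 < e ->
  exists t, ML vs - e < min_dist t vs.
Proof.
  intros Hne He. apply NNPP. intros Hno.
  assert (Hub : is_ub_Rbar (fun y => exists t, y = min_dist t vs) (Finite (ML vs - e))).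
  { intros y [t ->]. simpl. apply Rnot_lt_le. intros Ht. apply Hno. exists t. exact Ht. }
  pose proof (proj2 (ML_is_lub vs Hne) _ Hub). simpl in *. lra.
Qed.

Lemma Rle_of_forall_small_slack (a b e : R) :
  0 < e -> (forall d, 0 < d < e -> b - d <= a) -> b <= a.
Proof.
  intros He H. apply Rle_plus_epsilon. intros eps Heps.
  destruct (Rlt_dec eps e).
  - specialize (H eps ltac:(lra)). lra.
  - specialize (H (e / 2) ltac:(lra)). lra.
Qed.

Lemma min_dist_app_ge (ws : list nat) (w' : nat) (t V m c : R) :
  ws <> nil -> (forall w, In w ws -> INR w <= V) -> 0 < V -> 0 < c <= 1 / 2 ->
  m <= min_dist t ws -> c * V <= (m - c) * INR w' ->
  exists t', c <= min_dist t' (ws ++ w' :: nil).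
Proof.
  intros Hne Hle HV Hc Hm Hcond.
  set (W := INR w') in *.
  assert (HW : 0 < W).
  { pose proof (pos_INR w'). destruct (Rle_lt_or_eq_dec 0 W) as [| HW0]; auto.
    rewrite <- HW0 in Hcond. nra. }
  set (r := (m - c) / V).
  assert (HrV : r * V = m - c) by (unfold r; field; lra).
  assert (HrW : c <= r * W).
  { apply (Rmult_le_reg_r V); [exact HV |].
    replace (r * W * V) with (W * (r * V)) by ring. rewrite HrV. lra. }
  destruct (dist_int_ge_in_interval (t * W - r * W) c Hc) as [y [Hy Hyc]].
  exists (y / W). apply min_dist_ge_iff; [destruct ws; discriminate |].
  intros w Hw. apply in_app_or in Hw as [Hw | [<- | []]].
  - assert (Hshift : Rabs (t * INR w - y / W * INR w) <= m - c).
    { replace (t * INR w - y / W * INR w) with ((t * W - y) / W * INR w)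
        by (field; lra).
      rewrite Rabs_mult, (Rabs_right (INR w)) by (apply Rle_ge, pos_INR).
      rewrite <- HrV. apply Rmult_le_compat; [apply Rabs_pos | apply pos_INR | | auto].
      apply Rabs_le. split; apply (Rmult_le_reg_r W); try lra;
        field_simplify; lra. }
    pose proof (dist_int_Lipschitz (t * INR w) (y / W * INR w)).
    pose proof (proj1 (min_dist_ge_iff t m ws Hne) Hm w Hw). lra.
  - fold W. replace (y / W * W) with y by (field; lra). exact Hyc.
Qed.

Lemma ML_app_ge (ws : list nat) (w' : nat) (V c : R) :
  ws <> nil -> (forall w, In w ws -> INR w <= V) -> 0 < V -> 0 < c <= 1 / 2 ->
  c * V <= (ML ws - c) * INR w' -> c <= ML (ws ++ w' :: nil).
Proof.
  intros Hne Hle HV Hc Hcond.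
  apply (Rle_of_forall_small_slack _ _ c); [lra |]. intros d Hd.
  destruct (ML_approx ws d Hne ltac:(lra)) as [t Ht].
  (* lowering both [m] and [c] by [d] leaves [m - c] unchanged *)
  destruct (min_dist_app_ge ws w' t V (ML ws - d) (c - d)) as [t' Ht']; try lra; auto.
  - pose proof (pos_INR w'). nra.
  - eapply Rle_trans; [exact Ht' | apply ML_ge_min_dist; destruct ws; discriminate].
Qed.

Lemma dichotomy_gt_inv_ge (n : nat) (x : R) : (2 <= n)%nat ->
  (exists s : nat, (1 <= s)%nat /\ x = INR s / (INR (n - 1) * INR s + 1))
    \/ x >= 1 / INR (n - 1) ->
  x > 1 / INR n -> x >= 2 / (2 * INR n - 1).
Proof.
  intros Hn Hx Hgt. rewrite minus_INR in Hx by lia.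
  assert (HN : 2 <= INR n) by (apply (le_INR 2); lia).
  set (N := INR n) in *. simpl INR in Hx.
  destruct Hx as [[s [Hs ->]] | Hx].
  - destruct (Nat.eq_dec s 1) as [-> | Hs1].
    + simpl INR in Hgt. replace ((N - 1) * 1 + 1) with N in Hgt by ring. lra.
    + assert (HS : 2 <= INR s) by (apply (le_INR 2); lia).
      apply Rle_ge. apply Rmult_le_reg_r with ((2 * N - 1) * ((N - 1) * INR s + 1)).
      { apply Rmult_lt_0_compat; nra. }
      field_simplify; nra.
  - eapply Rge_trans; [exact Hx |]. apply Rle_ge.
    apply Rmult_le_reg_r with ((2 * N - 1) * (N - 1)); [nra |].
    field_simplify; lra.
Qed.

Lemma inv_mul_le_of_two_div_le (N L V W : R) :
  2 <= N -> 0 <= V -> (2 * N - 1) * V <= W -> 2 / (2 * N - 1) <= L ->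
  1 / N * V <= (L - 1 / N) * W.
Proof.
  intros HN HV HW HL.
  assert (HL2 : 2 <= L * (2 * N - 1)).
  { apply (Rmult_le_compat_r (2 * N - 1)) in HL; [| lra].
    replace (2 / (2 * N - 1) * (2 * N - 1)) with 2 in HL by (field; lra). exact HL. }
  apply Rmult_le_reg_r with N; [lra |].
  replace (1 / N * V * N) with V by (field; lra).
  replace ((L - 1 / N) * W * N) with ((L * N - 1) * W) by (field; lra).
  assert (HLN : 1 <= L * N) by nra.
  apply Rle_trans with ((L * N - 1) * ((2 * N - 1) * V)); [| apply Rmult_le_compat_l; lra].
  assert (0 <= N * (L * (2 * N - 1) - 2) * V)
    by (apply Rmult_le_pos; [apply Rmult_le_pos |]; lra).
  nra.
Qed.

Lemma incr_le_last (v : nat -> nat) (a b : nat) :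
  (forall i, (a <= i < b)%nat -> (v i < v (S i))%nat) ->
  forall i, (a <= i <= b)%nat -> (v i <= v b)%nat.
Proof.
  intros Hinc i Hi. remember (b - i)%nat as d eqn:Hd. revert i Hi Hd.
  induction d as [| d IH]; intros i Hi Hd.
  - replace i with b by lia. lia.
  - specialize (IH (S i) ltac:(lia) ltac:(lia)). specialize (Hinc i ltac:(lia)). lia.
Qed.

Theorem lemma8p5 (n : nat) (Hn : (3 <= n)%nat)
  (Hind : forall ws : list nat, length ws = (n - 1)%nat ->
     (forall w, In w ws -> (0 < w)%nat) ->
     (exists s : nat, (1 <= s)%nat /\
        ML ws = INR s / (INR (n - 1) * INR s + 1))
     \/ ML ws >= 1 / INR (n - 1))
  (v : nat -> nat)
  (Hpos : forall i, (1 <= i <= n - 1)%nat -> (0 < v i)%nat)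
  (Hinc : forall i, (1 <= i < n - 1)%nat -> (v i < v (S i))%nat)
  (HL : ML (map v (seq 1 (n - 1))) > 1 / INR n)
  (vn : nat) (Hvn_pos : (0 < vn)%nat)
  (Hvn : ((2 * n - 1) * v (n - 1) <= vn)%nat) :
  ML (map v (seq 1 (n - 1)) ++ vn :: nil) >= 1 / INR n.
Proof.
  set (l := map v (seq 1 (n - 1))) in *.
  assert (Hne : l <> nil) by (unfold l; destruct (n - 1)%nat eqn:E; [lia | discriminate]).
  assert (Hmem : forall w, In w l -> (0 < w)%nat /\ (w <= v (n - 1))%nat).
  { intros w Hw. apply in_map_iff in Hw as [i [<- Hi]]. apply in_seq in Hi.
    split; [apply Hpos | apply (incr_le_last v 1)]; auto; lia. }
  assert (HL2 : ML l >= 2 / (2 * INR n - 1)).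
  { apply (dichotomy_gt_inv_ge n); [lia | | exact HL]. apply Hind.
    - unfold l. rewrite length_map, length_seq. reflexivity.
    - intros w Hw. apply Hmem, Hw. }
  assert (HN : 3 <= INR n) by (pose proof (le_INR 3 n ltac:(lia)); simpl INR in *; lra).
  assert (HV : 0 < INR (v (n - 1)%nat)) by (apply lt_0_INR; apply Hpos; lia).
  assert (HW : (2 * INR n - 1) * INR (v (n - 1)%nat) <= INR vn).
  { apply le_INR in Hvn. rewrite mult_INR, minus_INR, mult_INR in Hvn by lia.
    simpl INR in Hvn. lra. }
  apply Rle_ge, (ML_app_ge l vn (INR (v (n - 1)%nat))); auto.
  - intros w Hw. apply le_INR, Hmem, Hw.
  - split; [apply Rdiv_lt_0_compat | apply Rmult_le_reg_r with (2 * INR n);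
      field_simplify]; lra.
  - apply inv_mul_le_of_two_div_le; lra.
Qed.
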